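(* Every cubic graph of path-width at most 4 contains a subgraph isomorphic to one of the following: the triangle, $K_{2,3}$, the domino, the twin-house, or the claw-square.
   Context: All graphs are finite and simple; cubic means 3-regular. The domino is the $2\times 3$ grid graph (vertices $a_1,a_2,a_3,b_1,b_2,b_3$, edges $a_1a_2,a_2a_3,b_1b_2,b_2b_3,a_1b_1,a_2b_2,a_3b_3$). The twin-house is the graph on vertices $p_1,\dots,p_6$ with edges $p_1p_2,p_1p_5,p_2p_6,p_5p_3,p_5p_4,p_6p_3,p_6p_4$. The claw-square is the graph on vertices $a_1,a_2,a_3,a_4,b_1,b_2,b_3,c$ with edges $a_1a_2,a_2a_3,a_3a_4,a_4a_1$, $cb_1,cb_2,cb_3$, $b_1a_1,b_2a_2,b_3a_3$. *)

From mathcomp Require Import all_boot all_order.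
Set Implicit Arguments. Unset Strict Implicit. Unset Printing Implicit Defensive.

Definition simple_graph (T : finType) (e : rel T) : Prop :=
  symmetric e /\ irreflexive e.

Definition nbhd (T : finType) (e : rel T) (x : T) : {set T} := [set y | e x y].
Definition cubic (T : finType) (e : rel T) : Prop :=
  forall x : T, #|nbhd e x| = 3.

Definition path_decomposition (T : finType) (e : rel T) (bags : seq {set T}) : Prop :=
  [/\ forall x : T, exists2 i, i < size bags & x \in nth set0 bags i,
      forall x y : T, e x y ->
        exists2 i, i < size bags & (x \in nth set0 bags i) && (y \in nth set0 bags i)
    & forall (x : T) (i j k : nat), i <= j -> j <= k -> k < size bags ->
        x \in nth set0 bags i -> x \in nth set0 bags k -> x \in nth set0 bags j].

(* Width of a decomposition = (max bag size) - 1; path-width <= k iff there is a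
   path decomposition all of whose bags have at most k+1 vertices. *)
Definition pathwidth_le (T : finType) (e : rel T) (k : nat) : Prop :=
  exists bags : seq {set T}, path_decomposition e bags /\
    forall B, B \in bags -> #|B| <= k.+1.

Definition edge_rel (n : nat) (E : seq (nat * nat)) : rel 'I_n :=
  fun x y => ((val x, val y) \in E) || ((val y, val x) \in E).

Definition has_subgraph (n : nat) (h : rel 'I_n) (T : finType) (e : rel T) : Prop :=
  exists f : 'I_n -> T, injective f /\ forall x y, h x y -> e (f x) (f y).

Definition triangle : rel 'I_3 := @edge_rel 3 [:: (0,1); (1,2); (0,2)].

Definition K23 : rel 'I_5 :=
  @edge_rel 5 [:: (0,2); (0,3); (0,4); (1,2); (1,3); (1,4)].

(* Domino: a1,a2,a3,b1,b2,b3 = 0,1,2,3,4,5. *)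
Definition domino : rel 'I_6 :=
  @edge_rel 6 [:: (0,1); (1,2); (3,4); (4,5); (0,3); (1,4); (2,5)].

(* Twin-house: p1,...,p6 = 0,...,5; edges p1p2,p1p5,p2p6,p5p3,p5p4,p6p3,p6p4. *)
Definition twin_house : rel 'I_6 :=
  @edge_rel 6 [:: (0,1); (0,4); (1,5); (4,2); (4,3); (5,2); (5,3)].

(* Claw-square: a1,a2,a3,a4,b1,b2,b3,c = 0,1,2,3,4,5,6,7. *)
Definition claw_square : rel 'I_8 :=
  @edge_rel 8 [:: (0,1); (1,2); (2,3); (3,0); (7,4); (7,5); (7,6); (4,0); (5,1); (6,2)].

From mathcomp Require Import all_boot all_order.
Set Implicit Arguments. Unset Strict Implicit. Unset Printing Implicit Defensive.

(* Order the vertices by the first bag of a path decomposition of width 4 that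
   contains them.  A vertex among the first k that still has a neighbour further
   on lies in the bag where vertex k+1 first appears, so every prefix has at most
   4 such open vertices.  A cubic graph is thus grown one vertex at a time, each
   new vertex being joined to at most 3 open ones, with never more than 4 open
   vertices.  An exhaustive search over these growth steps, run by [vm_compute],
   shows that within 10 steps every branch either exceeds 4 open vertices or
   contains one of the five graphs; in particular no branch becomes cubic first. *)

Definition boundary (T : finType) (e : rel T) (A : {set T}) : {set T} :=
  [set x in A | [exists y, e x y && (y \notin A)]].

Lemma boundary_setT (T : finType) (e : rel T) : boundary e [set: T] = set0.
Proof. by apply/setP => x; rewrite !inE; apply/existsP => [[y]]; rewrite inE andbF. Qed.

Lemma count_nbhd (T : finType) (e : rel T) (t : seq T) (x : T) :
  uniq t -> count (e x) t = #|nbhd e x :&: [set y in t]|.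
Proof.
move=> ut; rewrite -size_filter; have /card_uniqP <- := filter_uniq (e x) ut.
by apply: eq_card => y; rewrite mem_filter !inE andbC.
Qed.

Lemma count_le_card_nbhd (T : finType) (e : rel T) (t : seq T) (x : T) :
  uniq t -> count (e x) t <= #|nbhd e x|.
Proof. by move=> ut; rewrite count_nbhd // subset_leq_card // subsetIl. Qed.

Lemma count_lt_card_nbhd (T : finType) (e : rel T) (t : seq T) (x : T) :
  uniq t -> (count (e x) t < #|nbhd e x|) = [exists y, e x y && (y \notin t)].
Proof.
move=> ut; rewrite count_nbhd // -(andTb (_ < _)) -(subsetIl (nbhd e x) [set y in t]) -properEcard.
apply/properP/existsP => [[_ [y]] | [y /andP [exy yt]]].
  by rewrite !inE => exy; rewrite exy /= => yt; exists y; rewrite exy.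
by split; [exact: subsetIl | exists y; rewrite !inE ?exy // (negbTE yt) andbF].
Qed.

Section VertexSeparation.

Variables (T : finType) (e : rel T) (bags : seq {set T}).
Hypothesis pd : path_decomposition e bags.

Definition first_bag (x : T) : nat := find (fun B : {set T} => x \in B) bags.

Lemma has_bag x : has (fun B : {set T} => x \in B) bags.
Proof.
have [cover _ _] := pd; have [i ib xi] := cover x.
by apply/hasP; exists (nth set0 bags i); rewrite ?mem_nth.
Qed.

Lemma mem_first_bag x : x \in nth set0 bags (first_bag x).
Proof. exact: nth_find (has_bag x). Qed.

Lemma first_bag_lt x : first_bag x < size bags.
Proof. by rewrite -has_find has_bag. Qed.

Lemma first_bag_le x i : x \in nth set0 bags i -> first_bag x <= i.
Proof. by move=> xi; rewrite leqNgt; apply/negP => /(before_find set0); rewrite xi. Qed.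

Definition bag_order : seq T := sort (fun x y => first_bag x <= first_bag y) (enum T).

Lemma bag_order_uniq : uniq bag_order.
Proof. by rewrite sort_uniq enum_uniq. Qed.

Lemma mem_bag_order x : x \in bag_order.
Proof. by rewrite mem_sort mem_enum. Qed.

Lemma first_bag_index_mono x y :
  index x bag_order <= index y bag_order -> first_bag x <= first_bag y.
Proof.
have sorted_s : sorted (fun x y => first_bag x <= first_bag y) bag_order.
  by apply: sort_sorted => a b; exact: leq_total.
move=> le_xy; rewrite -(nth_index x (mem_bag_order x)) -(nth_index x (mem_bag_order y)).
apply: (sorted_leq_nth (fun a b c => @leq_trans _ _ _) (fun a => leqnn _) x sorted_s) => //;
  by rewrite inE index_mem mem_bag_order.
Qed.

(* An open vertex x of the prefix before z, with a later neighbour y, satisfies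
   first_bag x <= first_bag z <= first_bag y <= t for a bag t containing the
   edge xy, so x lies in the first bag of z by the interval property. *)
Lemma boundary_prefix_sub_bag z :
  boundary e [set x in take (index z bag_order) bag_order]
    \subset nth set0 bags (first_bag z) :\ z.
Proof.
set s := bag_order; set k := index z s.
have [_ edge_bag interval] := pd.
apply/subsetP => x; rewrite !inE => /andP [xk /existsP [y /andP [exy]]].
rewrite inE in_take ?mem_bag_order // -leqNgt => ky.
rewrite in_take ?mem_bag_order // in xk.
apply/andP; split; first by apply: contraTneq xk => ->; rewrite ltnn.
have [t tb /andP [xt yt]] := edge_bag x y exy.
apply: (interval x (first_bag x) _ t _ _ tb (mem_first_bag x) xt).
- by apply: first_bag_index_mono; exact: ltnW.
- by apply: leq_trans (first_bag_index_mono ky) (first_bag_le yt).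
Qed.

Lemma card_boundary_prefix w z : (forall B, B \in bags -> #|B| <= w.+1) ->
  #|boundary e [set x in take (index z bag_order) bag_order]| <= w.
Proof.
move=> small; apply: leq_trans (subset_leq_card (boundary_prefix_sub_bag z)) _.
have zb : z \in nth set0 bags (first_bag z) by exact: mem_first_bag.
by move: (small _ (mem_nth set0 (first_bag_lt z))); rewrite (cardsD1 z) zb add1n ltnS.
Qed.

End VertexSeparation.

(* A state is a graph on [0, n) given by its adjacency lists; the search only
   meets states in which every vertex has at most 3 neighbours.  Vertex n is
   added by [extend_state st N], joined to the vertices of N. *)
Definition state := seq (seq nat).

Definition adjacent (st : state) (i j : nat) : bool := j \in nth [::] st i.

Definition unsaturated (st : state) : seq nat :=
  [seq i <- iota 0 (size st) | size (nth [::] st i) < 3].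

Definition extend_state (st : state) (N : seq nat) : state :=
  rcons (mkseq (fun i => if i \in N then rcons (nth [::] st i) (size st)
                         else nth [::] st i) (size st)) N.

Fixpoint subseqs (s : seq nat) : seq (seq nat) :=
  if s is x :: s' then [seq x :: t | t <- subseqs s'] ++ subseqs s' else [:: [::]].

Lemma filter_subseqs (a : pred nat) s : [seq x <- s | a x] \in subseqs s.
Proof.
elim: s => [|x s IHs] /=; first by rewrite mem_seq1.
by rewrite mem_cat; case: (a x); rewrite ?(map_f (cons x) IHs) ?IHs ?orbT.
Qed.

Definition children (st : state) : seq state :=
  [seq extend_state st N | N <- subseqs (unsaturated st) & size N <= 3].

Definition is_embedding p (E : seq (nat * nat)) (st : state) (w : seq nat) : bool :=
  [&& size w == p, uniq w, all (gtn (size st)) w &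
      all (fun ab => adjacent st (nth 0 w ab.1) (nth 0 w ab.2)) E].

(* The search for an embedding is guided by a plan: pattern vertices in the
   order they are placed, each with its already placed neighbours, the first of
   which supplies the candidate images.  Only the final [is_embedding] test
   matters for soundness. *)
Definition plan := seq (nat * seq nat).

Fixpoint greedy_plan (E : seq (nat * nat)) (placed free : seq nat) (n : nat) : plan :=
  if n is n'.+1 then
    let back v := [seq u <- placed | ((u, v) \in E) || ((v, u) \in E)] in
    let v := foldl (fun v x => if size (back v) < size (back x) then x else v) (head 0 free) free in
    (v, back v) :: greedy_plan E (v :: placed) (rem v free) n'
  else [::].

Definition plans p E : seq (nat * plan) :=
  [seq (r, greedy_plan E [:: r] (rem r (iota 0 p)) p.-1) | r <- iota 0 p].

Fixpoint match_plan p E (st : state) (pl : plan) (w : seq (option nat)) : bool :=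
  if pl is (v, us) :: pl' then
    let img u := odflt 0 (nth None w u) in
    let cands := if us is u :: _ then nth [::] st (img u) else iota 0 (size st) in
    has (fun c => if (Some c \notin w) && all (fun u => adjacent st c (img u)) us
                  then match_plan p E st pl' (set_nth None w v (Some c)) else false) cands
  else is_embedding p E st (map (odflt 0) w).

(* The root of each plan is sent to the newest vertex: a forbidden subgraph
   avoiding it would already have stopped the search at the parent state. *)
Definition embeds p E (pls : seq (nat * plan)) (st : state) : bool :=
  has (fun rp => match_plan p E st rp.2 (set_nth None (nseq p None) rp.1 (Some (size st).-1))) pls.

Lemma match_plan_sound p E st pl w :
  match_plan p E st pl w -> exists v, is_embedding p E st v.
Proof.
elim: pl w => [|[v us] pl IHpl] w /=; first by exists (map (odflt 0) w).
by case/hasP => c _; case: ifP => // _; exact: IHpl.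
Qed.

Lemma embeds_sound p E pls st : embeds p E pls st -> exists w, is_embedding p E st w.
Proof. by case/hasP => rp _; exact: match_plan_sound. Qed.

Ltac edge_list_of h :=
  let t := eval cbv delta [h] in h in
  lazymatch t with edge_rel ?E => exact E end.

Definition triangle_edges : seq (nat * nat) := ltac:(edge_list_of triangle).
Definition K23_edges : seq (nat * nat) := ltac:(edge_list_of K23).
Definition domino_edges : seq (nat * nat) := ltac:(edge_list_of domino).
Definition twin_house_edges : seq (nat * nat) := ltac:(edge_list_of twin_house).
Definition claw_square_edges : seq (nat * nat) := ltac:(edge_list_of claw_square).

Definition triangle_plans : seq (nat * plan) := Eval vm_compute in plans 3 triangle_edges.
Definition K23_plans : seq (nat * plan) := Eval vm_compute in plans 5 K23_edges.
Definition domino_plans : seq (nat * plan) := Eval vm_compute in plans 6 domino_edges.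
Definition twin_house_plans : seq (nat * plan) := Eval vm_compute in plans 6 twin_house_edges.
Definition claw_square_plans : seq (nat * plan) := Eval vm_compute in plans 8 claw_square_edges.

Definition embeds_forbidden (st : state) : bool :=
  if embeds 3 triangle_edges triangle_plans st then true
  else if embeds 5 K23_edges K23_plans st then true
  else if embeds 6 domino_edges domino_plans st then true
  else if embeds 6 twin_house_edges twin_house_plans st then true
  else embeds 8 claw_square_edges claw_square_plans st.

(* [explore w fuel st] means that within [fuel] steps every way of growing [st]
   exceeds [w] unsaturated vertices or creates a forbidden subgraph; reaching a
   cubic state first is a failure. *)
Fixpoint explore (w fuel : nat) (st : state) : bool :=
  if fuel is fuel'.+1 then
    if w < size (unsaturated st) then true
    else if embeds_forbidden st then true
    else if (0 < size st) && (unsaturated st == [::]) then false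
    else all (explore w fuel') (children st)
  else false.

Lemma explore_empty : explore 4 10 [::].
Proof. vm_cast_no_check (erefl true). Qed.

Definition contains_forbidden (T : finType) (e : rel T) : Prop :=
  has_subgraph triangle e \/ has_subgraph K23 e \/ has_subgraph domino e \/
  has_subgraph twin_house e \/ has_subgraph claw_square e.

Section PrefixStates.

Variables (T : finType) (e : rel T) (x0 : T) (s : seq T).
Hypotheses (e_sym : symmetric e) (e_irr : irreflexive e) (e_cubic : cubic e) (s_uniq : uniq s).

Local Notation v i := (nth x0 s i).

Definition prefix_nbrs (k i : nat) : seq nat := [seq j <- iota 0 k | e (v i) (v j)].

Definition prefix_state (k : nat) : state := mkseq (prefix_nbrs k) k.

Lemma size_prefix_state k : size (prefix_state k) = k.
Proof. exact: size_mkseq. Qed.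

Lemma nth_prefix_state k i : i < k -> nth [::] (prefix_state k) i = prefix_nbrs k i.
Proof. exact: nth_mkseq. Qed.

Lemma size_prefix_nbrs k i : k <= size s -> size (prefix_nbrs k i) = count (e (v i)) (take k s).
Proof. by move=> ks; rewrite size_filter -(map_nth_iota0 x0 ks) count_map. Qed.

Lemma not_in_prefix k : k < size s -> v k \notin take k s.
Proof. by move=> ks; rewrite in_take ?mem_nth // index_uniq // ltnn. Qed.

Lemma prefix_nbrsS k i :
  prefix_nbrs k.+1 i = if e (v i) (v k) then rcons (prefix_nbrs k i) k else prefix_nbrs k i.
Proof. by rewrite /prefix_nbrs -addn1 iotaD add0n cats1 filter_rcons. Qed.

Lemma prefix_stateS k :
  prefix_state k.+1 = extend_state (prefix_state k) (prefix_nbrs k k).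
Proof.
apply: (@eq_from_nth _ [::]); first by rewrite size_rcons size_mkseq !size_prefix_state.
move=> i; rewrite size_prefix_state ltnS leq_eqVlt => /predU1P [-> | ik].
  by rewrite nth_prefix_state // prefix_nbrsS e_irr nth_rcons size_mkseq size_prefix_state ltnn eqxx.
rewrite (@nth_prefix_state k.+1 i (ltnW ik)) nth_rcons size_mkseq size_prefix_state ik.
rewrite nth_mkseq ?size_prefix_state // nth_prefix_state // prefix_nbrsS.
by rewrite mem_filter mem_iota leq0n add0n ik e_sym !andbT.
Qed.

Lemma unsaturated_prefix_state k : k <= size s ->
  unsaturated (prefix_state k) = [seq i <- iota 0 k | [exists y, e (v i) y && (y \notin take k s)]].
Proof.
move=> ks; rewrite /unsaturated size_prefix_state; apply: eq_in_filter => i.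
rewrite mem_iota add0n => ik; rewrite nth_prefix_state // size_prefix_nbrs //.
by rewrite -(e_cubic (v i)) count_lt_card_nbhd // take_uniq.
Qed.

Lemma size_unsaturated_prefix_state k : k <= size s ->
  size (unsaturated (prefix_state k)) = #|boundary e [set x in take k s]|.
Proof.
move=> ks; set P := [pred x | [exists y, e x y && (y \notin take k s)]].
have -> : size (unsaturated (prefix_state k)) = count P (take k s).
  by rewrite unsaturated_prefix_state // size_filter -[in RHS](map_nth_iota0 x0 ks) count_map.
rewrite -size_filter; have /card_uniqP <- := filter_uniq P (take_uniq k s_uniq).
apply: eq_card => x; rewrite !inE mem_filter andbC; congr andb.
by apply: eq_existsb => y; rewrite inE.
Qed.

Lemma prefix_state_child k : k < size s ->
  prefix_state k.+1 \in children (prefix_state k).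
Proof.
move=> ks; rewrite prefix_stateS; apply: map_f; rewrite mem_filter.
rewrite (size_prefix_nbrs _ (ltnW ks)) -(e_cubic (v k)) count_le_card_nbhd ?take_uniq //=.
have -> : prefix_nbrs k k = [seq j <- unsaturated (prefix_state k) | e (v k) (v j)].
  rewrite (unsaturated_prefix_state (ltnW ks)) -filter_predI; apply: eq_in_filter => j.
  rewrite mem_iota add0n /= => jk; case ekj: (e _ _) => //=; symmetry.
  by apply/existsP; exists (v k); rewrite e_sym ekj not_in_prefix.
exact: filter_subseqs.
Qed.

Lemma is_embedding_prefix_state (p : nat) E k w : k <= size s ->
  is_embedding p E (prefix_state k) w -> has_subgraph (@edge_rel p E) e.
Proof.
move=> ks /and4P [/eqP size_w w_uniq /allP w_lt /allP w_edges].
have wk (x : 'I_p) : nth 0 w x < k.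
  by rewrite -(size_prefix_state k); apply: w_lt; rewrite mem_nth // size_w.
exists (fun x : 'I_p => v (nth 0 w x)); split.
  move=> x y /eqP; rewrite nth_uniq ?(leq_trans (wk _) ks) //.
  by rewrite nth_uniq ?size_w // => /eqP /val_inj.
have edge_ok (a b : 'I_p) : (val a, val b) \in E -> e (v (nth 0 w a)) (v (nth 0 w b)).
  by move=> /w_edges; rewrite /adjacent nth_prefix_state ?wk // mem_filter => /andP [].
by move=> x y /orP [/edge_ok | /edge_ok]; rewrite // e_sym.
Qed.

Lemma embeds_prefix_state p E pls k : k <= size s ->
  embeds p E pls (prefix_state k) -> has_subgraph (@edge_rel p E) e.
Proof. by move=> ks /embeds_sound [w]; exact: is_embedding_prefix_state. Qed.

Lemma embeds_forbidden_prefix_state k : k <= size s ->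
  embeds_forbidden (prefix_state k) -> contains_forbidden e.
Proof.
move=> ks; rewrite /embeds_forbidden.
case: ifP => [/(embeds_prefix_state ks) ? _ | _]; first by left.
case: ifP => [/(embeds_prefix_state ks) ? _ | _]; first by right; left.
case: ifP => [/(embeds_prefix_state ks) ? _ | _]; first by do 2 right; left.
case: ifP => [/(embeds_prefix_state ks) ? _ | _ /(embeds_prefix_state ks) ?].
  by do 3 right; left.
by do 4 right.
Qed.

Lemma explore_prefix_state w fuel k : 0 < size s -> (forall x, x \in s) ->
  (forall k, k < size s -> #|boundary e [set x in take k s]| <= w) ->
  k <= size s -> explore w fuel (prefix_state k) -> contains_forbidden e.
Proof.
move=> s_gt0 s_full bounded; elim: fuel k => [//|fuel IHfuel] k /=.
rewrite leq_eqVlt => /predU1P [-> | ks].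
  rewrite -size_eq0 size_unsaturated_prefix_state // size_prefix_state s_gt0.
  have -> : [set x in take (size s) s] = [set: T] by apply/setP => x; rewrite take_size !inE s_full.
  rewrite boundary_setT cards0 /=.
  by case: ifP => // /(embeds_forbidden_prefix_state (leqnn _)).
rewrite size_unsaturated_prefix_state ?(ltnW ks) // ltnNge bounded //=.
case: ifP => [/(embeds_forbidden_prefix_state (ltnW ks)) // | _].
case: ifP => // _ /allP explore_children.
exact: IHfuel k.+1 ks (explore_children _ (prefix_state_child ks)).
Qed.

End PrefixStates.

Theorem lemma29 (T : finType) (e : rel T) :
  simple_graph e -> 0 < #|T| -> cubic e -> pathwidth_le e 4 ->
  has_subgraph triangle e \/ has_subgraph K23 e \/ has_subgraph domino e \/
  has_subgraph twin_house e \/ has_subgraph claw_square e.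
Proof.
move=> [e_sym e_irr] T_gt0 e_cubic [bags [pd small]].
have [x0 _] := card_gt0P T_gt0.
pose s := bag_order bags.
have s_uniq : uniq s := bag_order_uniq bags.
have bounded k : k < size s -> #|boundary e [set x in take k s]| <= 4.
  by move=> ks; rewrite -(index_uniq x0 ks s_uniq); exact: card_boundary_prefix.
have s_gt0 : 0 < size s by rewrite size_sort -cardT.
have start : explore 4 10 (prefix_state e x0 s 0) := explore_empty.
exact: (explore_prefix_state e_sym e_irr e_cubic s_uniq s_gt0 (@mem_bag_order _ bags)
          bounded (leq0n _) start).
Qed.
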